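(* Let $n,d,c\in\mathbb{N}$ with $d\ge 50$ and $c\in[d]$, let $\mathcal{F}\subseteq 2^{[n]}$ be a hereditary family with $\delta(\mathcal{F})\ge 2^{d-1}-c+1$, and let $P$ be an isolated pile of $\mathcal{F}$ with $\sum_{x\in P}\omega_{\mathcal{F}}(x)<2^d-c$. Then: (a) $t\ge c$; (b) $t\le 2c-2$; (c) for every $x\in P$, $d_{\mathcal{G}}(x)\ge 2^{d-1}-2c+2$; (d) if $x\in P$ is a bad vertex, then $\{x\}\in\mathcal{N}$; (e) $P$ contains at most $\frac d2-1$ good vertices.
   Context: A family is hereditary if it is closed under taking subsets. $d_{\mathcal{F}}(x)=|\{F\in\mathcal{F}:x\in F\}|$, $\delta(\mathcal{F})=\min_x d_{\mathcal{F}}(x)$, $N(x)=\bigcup_{x\in F\in\mathcal{F}}F$. The weight of $x$ is $\omega_{\mathcal{F}}(x)=\sum_{x\in F\in\mathcal{F}}\frac{1}{|F|}$. A vertex $x$ is good if $|N(x)|\ge d+1$ and bad if $|N(x)|=d$. A set $P\subseteq[n]$ with $|P|=d$ is a pile of $\mathcal{F}$ if $P\subseteq N(y)$ for every $y\in P$, and there exists $z\in P$ with $N(z)=P$; a pile is isolated if it is disjoint from every other pile. Given the pile $P$, let $\mathcal{G}=\{S\subseteq P: S\in\mathcal{F}\}$, $d_{\mathcal{G}}(x)=|\{S\in\mathcal{G}:x\in S\}|$, $t=2^d-|\mathcal{G}|$, $\mathcal{M}=2^{P}\setminus\mathcal{G}$, and $\mathcal{N}=\{P\setminus M: M\in\mathcal{M}\}$.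 *)

From mathcomp Require Import all_boot all_order all_algebra.
Set Implicit Arguments. Unset Strict Implicit. Unset Printing Implicit Defensive.
Import Order.TTheory GRing.Theory Num.Theory.

Section Defs.
Variable n : nat.
Implicit Types (F G : {set {set 'I_n}}) (P S : {set 'I_n}) (x : 'I_n).

Definition hereditary F : Prop :=
  forall A B : {set 'I_n}, A \in F -> B \subset A -> B \in F.

Definition degF F x : nat := #|[set S in F | x \in S]|.

Definition min_deg_ge F (k : nat) : Prop := forall x, k <= degF F x.

Definition nbhd F x : {set 'I_n} := \bigcup_(S in F | x \in S) S.

Definition weightF F x : rat := \sum_(S in F | x \in S) (#|S|%:R)^-1.

Definition good_v F (d : nat) x : bool := d.+1 <= #|nbhd F x|.
Definition bad_v F (d : nat) x : bool := #|nbhd F x| == d.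

Definition pileF F (d : nat) P : Prop :=
  #|P| = d /\ (forall y, y \in P -> P \subset nbhd F y) /\
  (exists2 z, z \in P & nbhd F z = P).

Definition isolated_pile F d P : Prop :=
  pileF F d P /\ (forall Q, pileF F d Q -> Q != P -> [disjoint P & Q]).

(* G = {S subset P : S in F} *)
Definition subfam F P : {set {set 'I_n}} := [set S in F | S \subset P].
(* t = 2^d - |G| *)
Definition t_of F (d : nat) P : nat := 2 ^ d - #|subfam F P|.
(* M = 2^P \ G *)
Definition missing_fam F P : {set {set 'I_n}} := powerset P :\: subfam F P.
(* N = {P \ M : M in M} *)
Definition compl_missing F P : {set {set 'I_n}} :=
  [set P :\: M | M in missing_fam F P].
End Defs.

From mathcomp Require Import all_boot all_order all_algebra zify.
Set Implicit Arguments. Unset Strict Implicit. Unset Printing Implicit Defensive.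
Import Order.TTheory GRing.Theory Num.Theory.

(* Let G be the members of F inside P, t = |2^P \ G| the number of missing
   sets, m(x) the number of missing sets through x and O(x) the members of F
   through x that leave P.  Counting the subsets of P through x gives
   d_F(x) = 2^(d-1) - m(x) + |O(x)|, so the degree bound says m(x) < |O(x)| + c;
   the weight of P splits as the number of nonempty members of G plus the
   weight E carried by the outer sets, which yields c <= t and E < t + 1 - c.
   As F is hereditary the missing sets form an up-set of 2^P: for the vertex z
   with N(z) = P this gives t <= 2 m(z) <= 2c - 2, and every missing M has
   2^|P \ M| <= t.  A good vertex carries outer weight at least 1/2, and an
   outer set of size s forces outer weight 2^(s-2)/s, so outer sets have size
   O(log d).  Double counting sum_x (t - m(x) + |O(x)|) >= d (t + 1 - c)
   against these bounds leaves room for at most d/2 - 1 good vertices. *)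

Lemma card_interval_sets (T : finType) (A B : {set T}) : A \subset B ->
  #|[set R : {set T} | A \subset R & R \subset B]| = 2 ^ (#|B| - #|A|).
Proof.
move=> sAB.
have -> : [set R : {set T} | A \subset R & R \subset B] =
          [set R :|: A | R in powerset (B :\: A)].
  apply/setP => R; rewrite inE; apply/andP/imsetP.
  - move=> [sAR sRB]; exists (R :\: A); first by rewrite powersetE setSD.
    by rewrite -[A in _ :|: A](setIidPr sAR) setUC setID.
  - move=> [R' + ->]; rewrite powersetE => sR'.
    by rewrite subsetUr subUset sAB (subset_trans sR') ?subsetDl.
rewrite card_in_imset ?card_powerset ?cardsD ?(setIidPr sAB) //.
have UAK R : R \in powerset (B :\: A) -> (R :|: A) :\: A = R.
  by rewrite powersetE subsetD => /andP[_ /setDidPl dRA]; rewrite setDUl setDv setU0 dRA.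
by move=> R1 R2 /UAK {2}<- /UAK {2}<- ->.
Qed.

Lemma exists_card_between (T : finType) (A S : {set T}) k :
  A \subset S -> #|A| <= k <= #|S| ->
  exists R : {set T}, [/\ A \subset R, R \subset S & #|R| = k].
Proof.
elim: {S}#|S| {-2}S (erefl #|S|) => [|m IH] S cS sAS /andP[hA hS].
  by exists S; split; rewrite ?subxx //; lia.
have [->|neq_kS] := eqVneq k #|S|; first by exists S; split; rewrite ?subxx.
have /subsetPn[a aS aA] : ~~ (S \subset A).
  by apply: contra neq_kS => /subset_leq_card; lia.
have sAS' : A \subset S :\ a by rewrite subsetD1 sAS.
have cSa : #|S :\ a|.+1 = #|S| by rewrite (cardsD1 a S) aS.
have [R [sAR sRS' cR]] := IH (S :\ a) ltac:(lia) sAS' ltac:(lia).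
by exists R; split; rewrite ?(subset_trans sRS') ?subsetDl.
Qed.

Lemma sum_card_notin (T : finType) (P : {set T}) (Ms : {set {set T}}) :
  \sum_(x in P) #|[set M in Ms | x \notin M]| = \sum_(M in Ms) #|P :\: M|.
Proof.
have card_sep (U : finType) (A : {set U}) (p : pred U) :
    #|[set u in A | p u]| = \sum_(u in A) p u.
  rewrite -sum1_card (eq_bigl (fun u => (u \in A) && p u)) => [|u]; last by rewrite inE.
  by rewrite big_mkcondr; apply: eq_bigr => u _; case: (p u).
under eq_bigr do rewrite card_sep.
rewrite exchange_big; apply: eq_bigr => M _.
by rewrite setDE -[P :&: ~: M]setIdE card_sep.
Qed.

Lemma linear_le_exp2 a b m k :
  a * m + b <= 2 ^ m -> a <= 2 ^ m -> m <= k -> a * k + b <= 2 ^ k.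
Proof.
move=> hm ha; elim: k => [|k IH]; first by rewrite leqn0 => /eqP m0; rewrite m0 in hm.
rewrite leq_eqVlt => /orP[/eqP <- // | mk].
have : 2 ^ m <= 2 ^ k by rewrite leq_exp2l.
have := IH mk; rewrite expnS; lia.
Qed.

Lemma exists_log_window d : 50 <= d ->
  exists J, [/\ d <= 2 ^ J, 7 * J + 2 <= d & 2 * J + 3 <= 2 ^ J.+1].
Proof.
move=> hd; have /andP[lo hi] := @trunc_log_bounds 2 d isT ltac:(lia).
set T := trunc_log 2 d in lo hi; exists T.+1.
have T5 : 5 <= T by rewrite -ltnS -(ltn_exp2l _ _ (isT : 1 < 2)); lia.
split; first exact: ltnW.
- have [T6|] := leqP 6 T; last by lia.
  have := @linear_le_exp2 7 9 6 T isT isT T6; lia.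
- have := @linear_le_exp2 2 1 3 T.+2 isT isT ltac:(lia); lia.
Qed.

Lemma ler_sum_subset (R : numDomainType) (T : finType) (A B : {set T}) (f : T -> R) :
  A \subset B -> (forall x, x \in B -> 0 <= f x)%R ->
  (\sum_(x in A) f x <= \sum_(x in B) f x)%R.
Proof.
move=> sAB f0; rewrite [leRHS](big_setID A) /= (setIidPr sAB) lerDl.
by apply: sumr_ge0 => x /setDP[xB _]; exact: f0.
Qed.

Section MissingSets.
Variables (n : nat) (F : {set {set 'I_n}}) (P : {set 'I_n}).
Implicit Types (x : 'I_n) (S M : {set 'I_n}).

Definition outer_sets x := [set S in F | x \in S] :\: powerset P.
Definition missing_deg x := #|[set M in missing_fam F P | x \in M]|.
Definition outer_deg x := #|outer_sets x|.
Definition outer_weight x : rat := (\sum_(S in outer_sets x) (#|S|%:R)^-1)%R.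

Lemma in_outer_sets x S : (S \in outer_sets x) = [&& S \in F, x \in S & ~~ (S \subset P)].
Proof. by rewrite !inE andbC -andbA. Qed.

Lemma in_subfam S : (S \in subfam F P) = (S \in F) && (S \subset P).
Proof. by rewrite inE. Qed.

Lemma in_missing_fam S : (S \in missing_fam F P) = (S \notin F) && (S \subset P).
Proof. by rewrite !inE; case: (S \subset P); rewrite ?andbT ?andbF. Qed.

Lemma subfam_sub_powerset : subfam F P \subset powerset P.
Proof. by apply/subsetP => S; rewrite in_subfam inE => /andP[]. Qed.

Lemma card_subfam_le : #|subfam F P| <= 2 ^ #|P|.
Proof. by rewrite -card_powerset subset_leq_card ?subfam_sub_powerset. Qed.

Lemma card_subfam_le_nonempty : #|subfam F P| <= #|subfam F P :\ set0|.+1.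
Proof. by rewrite (cardsD1 set0); case: (_ \in _). Qed.

Lemma card_missing_fam : #|missing_fam F P| = t_of F #|P| P.
Proof. by rewrite /t_of cardsD card_powerset (setIidPr subfam_sub_powerset). Qed.

Lemma degF_subfam_add_missing_deg x : x \in P ->
  degF (subfam F P) x + missing_deg x = 2 ^ #|P|.-1.
Proof.
move=> xP; have sxP : [set x] \subset P by rewrite sub1set.
have := card_interval_sets sxP; rewrite cards1 subn1 => <-.
rewrite /degF /missing_deg -[RHS](cardsID F); congr (_ + _); apply: eq_card => S;
  rewrite !inE sub1set; by case: (S \in F); case: (x \in S); case: (S \subset P).
Qed.

Lemma degF_split x : degF F x = degF (subfam F P) x + outer_deg x.
Proof.
rewrite /degF -(cardsID (powerset P) [set S in F | x \in S]); congr (_ + _).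
by apply: eq_card => S; rewrite !inE andbAC.
Qed.

Lemma outer_sets_eq0 x : (outer_sets x == set0) = (nbhd F x \subset P).
Proof.
apply/eqP/bigcupsP => [O0 S /andP[SF xS] | sNP].
  by apply: contraFT (in_set0 S) => nSP; rewrite -O0 in_outer_sets SF xS.
apply/setP => S; rewrite in_outer_sets inE; apply/negbTE/and3P => -[SF xS /negP[]].
by apply: sNP; rewrite SF.
Qed.

Lemma outer_deg_eq0 x : nbhd F x \subset P -> outer_deg x = 0.
Proof. by move=> sNP; apply/eqP; rewrite cards_eq0 outer_sets_eq0. Qed.

Lemma missing_deg_le x : missing_deg x <= #|missing_fam F P|.
Proof. by apply: subset_leq_card; apply/subsetP => M; rewrite inE => /andP[]. Qed.

Lemma card_missing_sub_missing_deg x :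
  #|missing_fam F P| - missing_deg x = #|[set M in missing_fam F P | x \notin M]|.
Proof.
rewrite /missing_deg setIdE -(cardsID [set M : {set 'I_n} | x \in M]) addKn.
by apply: eq_card => M; rewrite !inE andbC.
Qed.

Lemma sum_weightF :
  (\sum_(x in P) weightF F x
   = #|subfam F P :\ set0|%:R + \sum_(x in P) outer_weight x)%R.
Proof.
have split_weight x : (weightF F x
    = \sum_(S in subfam F P | x \in S) (#|S|%:R)^-1 + outer_weight x)%R.
  rewrite /weightF (bigID (mem (powerset P))) /=; congr (_ + _)%R; apply: eq_bigl => S.
    by rewrite in_subfam powersetE andbAC.
  by rewrite in_outer_sets powersetE andbA.
rewrite (eq_bigr _ (fun x _ => split_weight x)) big_split /=; congr (_ + _)%R.
rewrite (exchange_big_dep (mem (subfam F P))) /=; last by move=> ? ? _ /andP[].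
rewrite (bigID (fun S => S == set0)) /= big1 ?add0r; last first.
  by move=> S /andP[_ /eqP ->]; rewrite big1 // => x _; rewrite cards0 invr0.
rewrite -[RHS]sumr_const.
apply: eq_big => [S | S /andP[GS nS0]]; first by rewrite in_setD1 andbC.
have /subsetP sSP : S \subset P by move: GS; rewrite in_subfam => /andP[].
rewrite (eq_bigl (mem S)) => [|x]; last first.
  by rewrite GS /=; case: (boolP (x \in S)) => [/sSP -> | _]; rewrite ?andbF.
by rewrite sumr_const -(mulr_natr ((#|S|%:R)^-1 : rat)) mulVf // pnatr_eq0 cards_eq0.
Qed.

Lemma outer_weight_ge0 x : (0 <= outer_weight x)%R.
Proof. by apply: sumr_ge0 => S _; rewrite invr_ge0 ler0n. Qed.

Lemma outer_weight_le_sum x : x \in P ->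
  (outer_weight x <= \sum_(y in P) outer_weight y)%R.
Proof.
move=> xP; have sxP : [set x] \subset P by rewrite sub1set.
by have := ler_sum_subset (f := outer_weight) sxP (fun y _ => outer_weight_ge0 y); rewrite big_set1.
Qed.

Lemma outer_deg_le_weight x L : (forall S, S \in outer_sets x -> #|S| <= L) ->
  ((outer_deg x)%:R <= L%:R * outer_weight x)%R.
Proof.
move=> hL; rewrite /outer_deg mulr_sumr -sum1_card natr_sum; apply: ler_sum => S hS.
have S0 : 0 < #|S|.
  by rewrite card_gt0; apply/set0Pn; exists x; move: hS; rewrite in_outer_sets => /and3P[].
rewrite ler_pdivlMr ?ltr0n // mul1r ler_nat; exact: hL.
Qed.

Hypothesis hF : hereditary F.

Lemma missing_fam_upward M M' :
  M \in missing_fam F P -> M \subset M' -> M' \subset P -> M' \in missing_fam F P.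
Proof.
rewrite !in_missing_fam => /andP[MF _] sMM' ->; rewrite andbT.
by apply: contra MF => M'F; exact: hF M'F sMM'.
Qed.

Lemma card_missing_le_double x : x \in P -> #|missing_fam F P| <= 2 * missing_deg x.
Proof.
(* [M |-> x |: M] injects the missing sets avoiding [x] into those containing it. *)
move=> xP; have : #|[set M in missing_fam F P | x \notin M]| <= missing_deg x.
  rewrite -(@card_in_imset _ _ (fun M => x |: M)) => [|M1 M2]; last first.
    by move=> /setIdP[_ /setU1K h1] /setIdP[_ /setU1K h2] E; rewrite -h1 -h2 E.
  apply: subset_leq_card; apply/subsetP => M' /imsetP[M /setIdP[hM _] ->].
  apply/setIdP; split; last exact: setU11.
  apply: (missing_fam_upward hM (subsetUr _ _)).
  by rewrite subUset sub1set xP; move: hM; rewrite in_missing_fam => /andP[].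
by rewrite -card_missing_sub_missing_deg; have := missing_deg_le x; lia.
Qed.

Lemma exp_card_compl_le M : M \in missing_fam F P -> 2 ^ #|P :\: M| <= #|missing_fam F P|.
Proof.
move=> hM; have sMP : M \subset P by move: hM; rewrite in_missing_fam => /andP[].
rewrite cardsD (setIidPr sMP) -(card_interval_sets sMP); apply: subset_leq_card.
by apply/subsetP => R; rewrite inE => /andP[]; exact: missing_fam_upward.
Qed.

Lemma missing_deg_eq_card x : P :\ x \in F -> missing_deg x = #|missing_fam F P|.
Proof.
move=> PxF; apply/eqP; rewrite eqn_leq missing_deg_le /=; apply: subset_leq_card.
apply/subsetP => M hM; rewrite inE hM /=; apply: contraT => nxM.
move: hM; rewrite in_missing_fam => /andP[/negbTE <- sMP].
by apply: hF PxF _; rewrite subsetD1 sMP.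
Qed.

Lemma outer_weight_ge_exp x S k : x \in P -> S \in outer_sets x -> k.+2 <= #|S| ->
  ((2 ^ k)%:R / k.+2%:R <= outer_weight x)%R.
Proof.
move=> xP hS hk; move: (hS); rewrite in_outer_sets => /and3P[SF xS /subsetPn[y yS yP]].
have xy : x != y by apply: contraNneq yP => <-.
have sAS : [set x; y] \subset S by rewrite subUset !sub1set xS yS.
have hAk : #|[set x; y]| <= k.+2 <= #|S| by rewrite cards2 xy.
(* The sets between [[set x; y]] and a [k.+2]-subset [R] of [S] are [2 ^ k] outer
   sets of size at most [k.+2]. *)
have [R [sAR sRS cR]] := exists_card_between sAS hAk.
set I := [set R' : {set 'I_n} | [set x; y] \subset R' & R' \subset R].
have sIO : I \subset outer_sets x.
  apply/subsetP => R'; rewrite inE => /andP[/subsetP sA sR'R].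
  rewrite in_outer_sets (hF SF (subset_trans sR'R sRS)) sA ?set21 //=.
  by apply/subsetPn; exists y => //; apply: sA; rewrite set22.
have cI : #|I| = 2 ^ k by rewrite card_interval_sets // cR cards2 xy subn2.
rewrite /outer_weight.
apply: le_trans (ler_sum_subset (f := fun S => (#|S|%:R)^-1)%R sIO _); last first.
  by move=> *; rewrite invr_ge0 ler0n.
rewrite -cI mulrC mulr_natr -sumr_const; apply: ler_sum => R'; rewrite inE => /andP[sAR' sR'R].
have R'0 : 0 < #|R'|.
  by rewrite card_gt0; apply/set0Pn; exists x; apply: (subsetP sAR'); rewrite set21.
by rewrite lef_pV2 ?posrE ?ltr0n // ler_nat -cR subset_leq_card.
Qed.

Lemma outer_weight_ge_half x : x \in P -> ~~ (nbhd F x \subset P) ->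
  ((2%:R)^-1 <= outer_weight x)%R.
Proof.
move=> xP; rewrite -outer_sets_eq0 => /set0Pn[S hS].
have S2 : 1 < #|S|.
  move: (hS); rewrite in_outer_sets => /and3P[_ xS /subsetPn[y yS yP]].
  by apply/card_gt1P; exists x, y; split => //; apply: contraNneq yP => <-.
by have := outer_weight_ge_exp (k := 0) xP hS S2; rewrite expn0 mul1r.
Qed.
End MissingSets.

Section IsolatedPile.
Variables (n d c : nat) (F : {set {set 'I_n}}) (P : {set 'I_n}) (z : 'I_n).
Hypotheses (hF : hereditary F) (hP : #|P| = d) (zP : z \in P) (hz : nbhd F z = P).
Hypotheses (c_gt0 : 0 < c) (hc : 2 * c <= 2 ^ d.-1) (hdeg : min_deg_ge F (2 ^ d.-1 - c + 1)).
Hypothesis hW : (\sum_(x in P) weightF F x < (2 ^ d - c)%:R)%R.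

Local Notation t := (t_of F d P).
Local Notation good := [set x in P | good_v F d x].
Local Notation E := (\sum_(x in P) outer_weight F P x)%R.

Lemma card_missing_pile : #|missing_fam F P| = t.
Proof. by rewrite card_missing_fam hP. Qed.

Lemma missing_deg_lt x : x \in P -> missing_deg F P x < outer_deg F P x + c.
Proof.
move=> xP; have := hdeg x; rewrite (degF_split F P).
by have := degF_subfam_add_missing_deg F xP; rewrite hP; lia.
Qed.

Lemma nonempty_subfam_weight_lt : (#|subfam F P :\ set0|%:R + E < (2 ^ d - c)%:R)%R.
Proof. by rewrite -sum_weightF. Qed.

Lemma c_le_t : c <= t.
Proof.
have : #|subfam F P :\ set0| < 2 ^ d - c.
  rewrite -(ltr_nat rat); apply: le_lt_trans nonempty_subfam_weight_lt; rewrite lerDl.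
  by apply: sumr_ge0 => x _; exact: outer_weight_ge0.
by have := card_subfam_le_nonempty F P; rewrite /t_of; lia.
Qed.

Lemma sum_outer_weight_lt : (E < (t + 1 - c)%:R)%R.
Proof.
have hG := card_subfam_le F P; rewrite hP in hG.
have : 2 ^ d - c <= (t + 1 - c) + #|subfam F P :\ set0|.
  by have := c_le_t; have := card_subfam_le_nonempty F P; rewrite /t_of; lia.
rewrite -(ler_nat rat) natrD => h; have := lt_le_trans nonempty_subfam_weight_lt h.
by rewrite addrC ltrD2r.
Qed.

Lemma t_le_2c : t <= 2 * c - 2.
Proof.
have := missing_deg_lt zP; rewrite outer_deg_eq0 ?hz //.
by have := card_missing_le_double hF zP; rewrite card_missing_pile; lia.
Qed.

Lemma degF_subfam_ge x : x \in P -> 2 ^ d.-1 - 2 * c + 2 <= degF (subfam F P) x.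
Proof.
move=> xP; have := degF_subfam_add_missing_deg F xP; have := missing_deg_le F P x.
by rewrite hP card_missing_pile; have := t_le_2c; have := c_le_t; lia.
Qed.

Lemma bad_singleton_compl_missing x : x \in P -> P \subset nbhd F x -> bad_v F d x ->
  [set x] \in compl_missing F P.
Proof.
move=> xP sPN; rewrite /bad_v -hP => /eqP cN.
have /eqP NP : P == nbhd F x by rewrite eqEcard sPN (eq_leq cN).
have := missing_deg_lt xP; rewrite outer_deg_eq0 -?NP // add0n => hx.
have PxF : P :\ x \notin F.
  apply: contraTN hx => PxF; rewrite -leqNgt (missing_deg_eq_card hF PxF) card_missing_pile.
  exact: c_le_t.
apply/imsetP; exists (P :\ x); first by rewrite in_missing_fam PxF subD1set.
by rewrite setDDr setDv set0U (setIidPr _) // sub1set.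
Qed.

Section GoodVertices.
Variable J : nat.
Hypotheses (hcd : c <= d) (hdJ : d <= 2 ^ J) (hJd : 7 * J + 2 <= d).
Hypothesis hJ : 2 * J + 3 <= 2 ^ J.+1.

Local Notation slack := (t + 1 - c).

Lemma card_good_lt_slack : #|good| < 2 * slack.
Proof.
have sgP : good \subset P.
  by apply/subsetP => x; rewrite inE => /andP[].
have : (#|good|%:R / 2%:R <= E)%R.
  apply: le_trans (ler_sum_subset sgP (fun x _ => outer_weight_ge0 F P x)).
  rewrite -sum1_card natr_sum mulr_suml; apply: ler_sum => x; rewrite inE => /andP[xP gx].
  rewrite mul1r; apply: (outer_weight_ge_half hF xP).
  by apply: contraL gx => /subset_leq_card; rewrite hP /good_v -ltnNge ltnS.
move/le_lt_trans/(_ sum_outer_weight_lt); rewrite ltr_pdivrMr // -natrM ltr_nat; lia.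
Qed.

Lemma card_outer_set_le x S : x \in P -> S \in outer_sets F P x -> #|S| <= 2 * J + 2.
Proof.
move=> xP hS; rewrite leqNgt; apply/negP => hSJ.
(* [S] alone would carry weight [2 ^ (2J+1) / (2J+3) >= d > slack > E]. *)
have hexp : d * (2 * J + 3) <= 2 ^ (2 * J + 1).
  by rewrite (_ : 2 * J + 1 = J + J.+1) ?expnD ?leq_mul //; lia.
have : 2 ^ (2 * J + 1) < slack * (2 * J + 1).+2.
  rewrite -(ltr_nat rat) natrM -ltr_pdivrMr //.
  apply: le_lt_trans (@outer_weight_ge_exp _ _ _ hF _ _ (2 * J + 1) xP hS _) _; first lia.
  apply: le_lt_trans (outer_weight_le_sum F xP) _; exact: sum_outer_weight_lt.
have : slack * (2 * J + 1).+2 <= d * (2 * J + 3).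
  by apply: leq_mul; have := t_le_2c; have := c_le_t; lia.
lia.
Qed.

Lemma sum_outer_deg_lt : \sum_(x in P) outer_deg F P x < (2 * J + 2) * slack.
Proof.
rewrite -(ltr_nat rat) natr_sum natrM.
apply: (le_lt_trans (y := ((2 * J + 2)%:R * E)%R)).
  rewrite mulr_sumr; apply: ler_sum => x xP; apply: outer_deg_le_weight => S.
  exact: card_outer_set_le.
by rewrite ltr_pM2l ?ltr0n ?addn2 // sum_outer_weight_lt.
Qed.

Lemma sum_missing_compl_le : \sum_(x in P) (t - missing_deg F P x) <= t * J.
Proof.
(* The sum counts the pairs [(x, M)] with [x \in P :\: M], and every missing [M]
   has [2 ^ #|P :\: M| <= t < 2 ^ J.+1]. *)
rewrite -card_missing_pile; under eq_bigr do rewrite card_missing_sub_missing_deg.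
rewrite sum_card_notin -sum1_card big_distrl /=; apply: leq_sum => M hM; rewrite mul1n.
rewrite -ltnS -(ltn_exp2l _ _ (isT : 1 < 2)); apply: leq_ltn_trans (exp_card_compl_le hF hM) _.
by rewrite card_missing_pile expnS; have := t_le_2c; lia.
Qed.

Lemma mul_slack_le_sum :
  d * slack <= \sum_(x in P) (t - missing_deg F P x) + \sum_(x in P) outer_deg F P x.
Proof.
rewrite -big_split /= -{1}hP -sum_nat_const; apply: leq_sum => x xP.
by have := missing_deg_lt xP; have := missing_deg_le F P x; rewrite card_missing_pile; lia.
Qed.

Lemma card_good_le_window : 2 * #|good|.+1 <= d.
Proof.
rewrite leqNgt; apply/negP => hg.
move: card_good_lt_slack t_le_2c c_le_t mul_slack_le_sum sum_missing_compl_le sum_outer_deg_lt.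
move Ek : slack => k hgk ht hct hcount hmiss hout.
(* [hg] and [hgk] give d < 4 k, hence t = k + c - 1 < 5 k. *)
have tJ : t * J <= 5 * k * J by apply: leq_mul => //; lia.
suff : d * k < (7 * J + 2) * k by rewrite ltn_mul2r => /andP[_]; lia.
lia.
Qed.
End GoodVertices.

Lemma card_good_le : 50 <= d -> c <= d -> 2 * #|good|.+1 <= d.
Proof.
move=> hd hcd; have [J [hdJ hJd hJ]] := exists_log_window hd.
exact: card_good_le_window hcd hdJ hJd hJ.
Qed.
End IsolatedPile.

Theorem mainTheorem16 (n d c : nat) (F : {set {set 'I_n}}) (P : {set 'I_n}) :
  50 <= d -> 1 <= c <= d ->
  hereditary F ->
  min_deg_ge F (2 ^ d.-1 - c + 1) ->
  isolated_pile F d P ->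
  (\sum_(x in P) weightF F x < (2 ^ d - c)%:R)%R ->
  [/\ c <= t_of F d P,
      t_of F d P <= 2 * c - 2,
      (forall x, x \in P -> 2 ^ d.-1 - 2 * c + 2 <= degF (subfam F P) x),
      (forall x, x \in P -> bad_v F d x -> [set x] \in compl_missing F P)
    & ((#|[set x in P | good_v F d x]|%:R : rat) <= d%:R / 2 - 1)%R].
Proof.
move=> hd /andP[c_gt0 hcd] hF hdeg [[hP [hPN [z zP hz]]] _] hW.
have hc : 2 * c <= 2 ^ d.-1.
  by have := @linear_le_exp2 4 4 5 d.-1 isT isT ltac:(lia); lia.
split.
- exact: c_le_t hP zP c_gt0 hc hW.
- exact: t_le_2c hF hP zP hz c_gt0 hc hdeg hW.
- exact: degF_subfam_ge hF hP zP hz c_gt0 hc hdeg hW.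
- by move=> x xP /(bad_singleton_compl_missing hF hP zP c_gt0 hc hdeg hW xP (hPN x xP)).
have := card_good_le hF hP zP hz c_gt0 hc hdeg hW hd hcd.
by rewrite lerBrDr ler_pdivlMr // -(natrD rat _ 1) -natrM ler_nat; lia.
Qed.
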